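(* Let $A, C, D$ be binary random variables, with $A$ taking values $a,\overline{a}$, $C$ taking values $c,\overline{c}$, $D$ taking values $d,\overline{d}$, and let $Y$ be a real random variable with finite expectation. Suppose the joint distribution factorizes as \[ p(A,C,D,Y)=p(C)\,p(D\mid C)\,p(A\mid C)\,p(Y\mid A,C), \] and that every event $\{A=x, C=y, D=z\}$ has positive probability. Let $p(c)=0.5$ and $p(a\mid c)=p(\overline{a}\mid\overline{c})=p(d\mid c)=p(\overline{d}\mid\overline{c})\ge 0.5$. If \[ E[Y|a,c]-E[Y|a,\overline{c}]\ \ge\ E[Y|\overline{a},\overline{c}]-E[Y|\overline{a},c]\ \ge\ 0, \] then $RD_{crude}\ge RD_{obs}\ge RD_{true}$.
   Context: $RD_{true}=E[Y|a,c]p(c)+E[Y|a,\overline{c}]p(\overline{c})-E[Y|\overline{a},c]p(c)-E[Y|\overline{a},\overline{c}]p(\overline{c})$; $RD_{crude}=E[Y|a]-E[Y|\overline{a}]$; $RD_{obs}=E[Y|a,d]p(d)+E[Y|a,\overline{d}]p(\overline{d})-E[Y|\overline{a},d]p(d)-E[Y|\overline{a},\overline{d}]p(\overline{d})$. *)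

From HB Require Import structures.
From mathcomp Require Import all_boot all_order all_algebra.
From mathcomp Require Import all_classical all_reals all_analysis.
Set Implicit Arguments. Unset Strict Implicit. Unset Printing Implicit Defensive.
Import Order.TTheory GRing.Theory Num.Theory.
Local Open Scope classical_set_scope.
Local Open Scope ring_scope.

(* A binary random variable is encoded by a measurable event S:
   the variable takes its "positive" value (a, c, d) on S and its
   "negative" value (a bar, c bar, d bar) on ~` S.  [lit S b] is the
   event {variable = b}. *)
Definition lit (T : Type) (S : set T) (b : bool) : set T :=
  if b then S else ~` S.

Section Defs.
Context (d : measure_display) (T : measurableType d) (R : realType)
  (P : probability T R).

Definition Pr (S : set T) : R := fine (P S).

Definition cPr (S H : set T) : R := Pr (S `&` H) / Pr H.

Definition condE (Y : T -> R) (H : set T) : R :=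
  fine (\int[P]_(x in H) (Y x)%:E) / Pr H.

Definition factorizes (A C D : set T) (Y : T -> R) : Prop :=
  forall (x y z : bool) (B : set R), measurable B ->
    Pr (lit A x `&` lit C y `&` lit D z `&` Y @^-1` B) =
      Pr (lit C y) * cPr (lit D z) (lit C y) * cPr (lit A x) (lit C y)
      * cPr (Y @^-1` B) (lit A x `&` lit C y).

Definition RD_true (A C : set T) (Y : T -> R) : R :=
  condE Y (A `&` C) * Pr C + condE Y (A `&` ~` C) * Pr (~` C)
  - condE Y (~` A `&` C) * Pr C - condE Y (~` A `&` ~` C) * Pr (~` C).

Definition RD_crude (A : set T) (Y : T -> R) : R :=
  condE Y A - condE Y (~` A).

Definition RD_obs (A D : set T) (Y : T -> R) : R :=
  condE Y (A `&` D) * Pr D + condE Y (A `&` ~` D) * Pr (~` D)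
  - condE Y (~` A `&` D) * Pr D - condE Y (~` A `&` ~` D) * Pr (~` D).

End Defs.

From HB Require Import structures.
From mathcomp Require Import all_boot all_order all_algebra.
From mathcomp Require Import all_classical all_reals all_analysis.
From mathcomp Require Import measurable_realfun.
From mathcomp Require Import lra ring.
Set Implicit Arguments.
Unset Strict Implicit.
Unset Printing Implicit Defensive.
Import Order.TTheory GRing.Theory Num.Theory.
Local Open Scope classical_set_scope.
Local Open Scope ring_scope.

(* Given C, the factorization makes D independent of (A, Y).  Hence inside a
   stratum {A = x, C = y} conditioning further on D does not move the mean of
   Y, and E[Y | A = x, D = z] is the mean of the stratum means E[Y | x, c] and
   E[Y | x, c bar] weighted by p(c) p(z | c) p(x | c).  With p(c) = 1/2 and the
   common value q of p(a | c), p(a bar | c bar), p(d | c), p(d bar | c bar),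
   put s = q^2 + (1 - q)^2 and
   X = (E[Y | a, c] - E[Y | a, c bar]) - (E[Y | a bar, c bar] - E[Y | a bar, c]),
   which is nonnegative by assumption; then
     RD_obs - RD_true = (2q - 1) X / 4s  and  RD_crude - RD_obs = (2q - 1)^3 X / 4s. *)

Definition wmean {R : fieldType} (a b wa wb : R) : R := (a * wa + b * wb) / (wa + wb).

Lemma wmean_risk_difference_ordering (R : realFieldType) (q e11 e10 e01 e00 : R) :
  1 / 2 <= q -> q < 1 -> e00 - e01 <= e11 - e10 ->
  let h := 1 / 2 in let q' := 1 - q in
  let rd_true := e11 * h + e10 * h - e01 * h - e00 * h in
  let rd_obs := wmean e11 e10 (h * q * q) (h * q' * q') * h
    + wmean e11 e10 (h * q' * q) (h * q * q') * h
    - wmean e01 e00 (h * q * q') (h * q' * q) * h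
    - wmean e01 e00 (h * q' * q') (h * q * q) * h in
  let rd_crude := wmean e11 e10 (h * q) (h * q') - wmean e01 e00 (h * q') (h * q) in
  rd_true <= rd_obs /\ rd_obs <= rd_crude.
Proof.
move=> hq hq1 he h q' rd_true rd_obs rd_crude.
set s := q ^+ 2 + (1 - q) ^+ 2.
have s_gt0 : 0 < s by rewrite /s; nra.
have t_neq0 : q * (1 - q) + (1 - q) * q != 0 by rewrite gt_eqF //; nra.
set X := (e11 - e10) - (e00 - e01).
have obs_true : rd_obs - rd_true = (2 * q - 1) * X / (4 * s).
  rewrite /rd_obs /rd_true /wmean /X /s /h /q'; field.
  by rewrite (gt_eqF s_gt0) t_neq0.
have crude_obs : rd_crude - rd_obs = (2 * q - 1) ^+ 3 * X / (4 * s).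
  rewrite /rd_crude /rd_obs /wmean /X /s /h /q'; field.
  by rewrite (gt_eqF s_gt0) t_neq0 ?subrK ?oner_neq0.
have twoq1_ge0 : 0 <= 2 * q - 1 by lra.
have X_ge0 : 0 <= X by rewrite /X; lra.
have s4_ge0 : 0 <= 4 * s by rewrite mulr_ge0 // ltW.
split; rewrite -subr_ge0 ?obs_true ?crude_obs divr_ge0 //.
  exact: mulr_ge0.
by rewrite mulr_ge0 // exprn_ge0.
Qed.

Section integral_scaling.
Context d (T : measurableType d) (R : realType) (P : probability T R)
  (Y : {RV P >-> R}).
Local Open Scope ereal_scope.

Lemma preimage_mul_indic (S : set T) (mS : measurable S) (B : set R) :
  B `<=` ~` [set 0%R] -> (Y * indic_mfun S mS)%R @^-1` B = S `&` Y @^-1` B.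
Proof.
move=> B0; apply/seteqP; split => x /=.
  rewrite -[X in B X -> _]/(Y x * \1_S x)%R indicE.
  case: (boolP (x \in S)) => [/set_mem xS|_]; rewrite ?mulr1 ?mulr0.
    by split.
  by move=> /B0 /(_ erefl).
by move=> [/mem_set xS YB]; rewrite -[X in B X]/(Y x * \1_S x)%R indicE xS mulr1.
Qed.

(* Off 0, the preimages under [Y * \1_S] are the events [S `&` Y @^-1` B], so
   the law of [Y * \1_S] on [~` [set 0]] sees exactly the part of P that the
   conditional independence hypotheses below talk about. *)
Lemma ge0_integral_distribution_mul_indic (S : set T) (mS : measurable S)
    (h : R -> R) :
  measurable_fun setT h -> h 0%R = 0%R -> (forall y, 0 <= h y)%R ->
  \int[P]_(x in S) (h (Y x))%:E =
  \int[distribution P (Y * indic_mfun S mS)%R]_(y in ~` [set 0%R]) (h y)%:E.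
Proof.
move=> mh h0 h_ge0; set g := (Y * indic_mfun S mS)%R.
have hgE x : (h (g x))%:E = ((fun x => (h (Y x))%:E) \_ S) x.
  rewrite -[g x]/(Y x * \1_S x)%R indicE /patch.
  by case: ifP; rewrite ?mulr1 ?mulr0 ?h0.
have mEh : measurable_fun setT (EFin \o h) by exact/measurable_EFinP.
rewrite integral_mkcond [RHS]integral_mkcond.
transitivity (\int[P]_x ((EFin \o h) \o g) x).
  by apply: eq_integral => x _; rewrite -hgE.
transitivity (\int[distribution P g]_y (h y)%:E).
  rewrite /distribution ge0_integral_pushforward ?preimage_setT //.
  by move=> y _; rewrite lee_fin.
apply: eq_integral => y _; rewrite /patch; case: ifPn => // yN0.
suff -> : y = 0%R by rewrite h0.
by apply: contra_notP (negP yN0) => y0; exact: mem_set.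
Qed.

Lemma ge0_integral_setI_condindep (S E : set T) (k : R) (h : R -> R) :
  measurable S -> measurable E -> (0 <= k)%R ->
  (forall B, measurable B ->
    P (S `&` E `&` Y @^-1` B) = k%:E * P (S `&` Y @^-1` B)) ->
  measurable_fun setT h -> h 0%R = 0%R -> (forall y, 0 <= h y)%R ->
  \int[P]_(x in S `&` E) (h (Y x))%:E = k%:E * \int[P]_(x in S) (h (Y x))%:E.
Proof.
move=> mS mE k_ge0 indep mh h0 h_ge0; have mSE := measurableI _ _ mS mE.
rewrite (ge0_integral_distribution_mul_indic mSE) //.
rewrite (ge0_integral_distribution_mul_indic mS) //.
rewrite -[k]/(NngNum k_ge0)%:num -ge0_integral_mscale //; first last.
- by move=> y _; rewrite lee_fin.
- exact/measurable_EFinP/measurable_funTS.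
- exact: measurableC.
apply: eq_measure_integral => B mB B0.
change (P ((Y * indic_mfun (S `&` E) mSE)%R @^-1` B) =
  k%:E * P ((Y * indic_mfun S mS)%R @^-1` B)).
by rewrite !preimage_mul_indic // indep.
Qed.

Lemma integral_setI_condindep (S E : set T) (k : R) :
  measurable S -> measurable E -> (0 <= k)%R ->
  (forall B, measurable B ->
    P (S `&` E `&` Y @^-1` B) = k%:E * P (S `&` Y @^-1` B)) ->
  P.-integrable setT (EFin \o Y) ->
  \int[P]_(x in S `&` E) (Y x)%:E = k%:E * \int[P]_(x in S) (Y x)%:E.
Proof.
move=> mS mE k_ge0 indep intY.
have intS : P.-integrable S (EFin \o Y) := integrableS measurableT mS (subsetT S) intY.
have scale := ge0_integral_setI_condindep mS mE k_ge0 indep.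
have mid : measurable_fun setT (@idfun R) by exact: measurable_id.
rewrite integralE [in RHS]integralE funerpos funerneg.
have id0 : ((@idfun R)^\+ 0 = 0 /\ (@idfun R)^\- 0 = 0)%R.
  by rewrite /funrpos /funrneg oppr0 maxxx.
rewrite (scale _ (measurable_funrpos mid) id0.1 (funrpos_ge0 _)).
rewrite (scale _ (measurable_funrneg mid) id0.2 (funrneg_ge0 _)).
have := integrable_pos_fin_num mS intS; have := integrable_neg_fin_num mS intS.
rewrite funerpos funerneg => /fineK <- /fineK <-.
by rewrite -!EFinM -EFinB -mulrBr.
Qed.

End integral_scaling.

Section conditional_expectation.
Context d (T : measurableType d) (R : realType) (P : probability T R).

Lemma PrE (S : set T) : measurable S -> P S = (Pr P S)%:E.
Proof. by move=> mS; rewrite /Pr fineK // fin_num_measure. Qed.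

Lemma cPr_ge0 (S H : set T) : 0 <= cPr P S H.
Proof. by rewrite /cPr divr_ge0 // fine_ge0. Qed.

Lemma Pr_setI_cPr (S H : set T) : Pr P H != 0 -> Pr P (S `&` H) = Pr P H * cPr P S H.
Proof. by move=> H0; rewrite /cPr mulrC divfK. Qed.

Lemma Pr_splitC (S E : set T) : measurable S -> measurable E ->
  Pr P S = Pr P (S `&` E) + Pr P (S `&` ~` E).
Proof.
move=> mS mE; have mSE := measurableI _ _ mS mE.
have mSnE := measurableI _ _ mS (measurableC mE).
rewrite /Pr -fineD ?fin_num_measure // -measureU //.
  by rewrite -setIUr setUv setIT.
by rewrite setIACA setICr setI0.
Qed.

Lemma Pr_setC (S : set T) : measurable S -> Pr P (~` S) = 1 - Pr P S.
Proof. by move=> mS; rewrite /Pr probability_setC // PrE. Qed.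

Lemma cPr_setC (S H : set T) : measurable S -> measurable H -> Pr P H != 0 ->
  cPr P (~` S) H = 1 - cPr P S H.
Proof.
move=> mS mH H0; rewrite /cPr (Pr_splitC mH mS) !(setIC H) in H0 *.
by field.
Qed.

Variables (Y : {RV P >-> R}).
Hypothesis intY : P.-integrable setT (EFin \o Y).

Lemma fine_integral_splitC (S E : set T) : measurable S -> measurable E ->
  fine (\int[P]_(x in S) (Y x)%:E) =
  fine (\int[P]_(x in S `&` E) (Y x)%:E) + fine (\int[P]_(x in S `&` ~` E) (Y x)%:E).
Proof.
move=> mS mE; have mSE := measurableI _ _ mS mE.
have mSnE := measurableI _ _ mS (measurableC mE).
have intS D : measurable D -> P.-integrable D (EFin \o Y).
  by move=> mD; exact: integrableS measurableT mD (subsetT D) intY.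
rewrite -fineD ?integrable_fin_num ?intS // -integral_setU //.
- by rewrite -setIUr setUv setIT.
- by rewrite -setIUr setUv setIT; case/integrableP: (intS _ mS).
- by apply/disj_set2P; rewrite setIACA setICr setI0.
Qed.

Lemma condE_mulPr (H : set T) : measurable H ->
  fine (\int[P]_(x in H) (Y x)%:E) = condE P Y H * Pr P H.
Proof.
move=> mH; have [H0|H0] := eqVneq (Pr P H) 0; last by rewrite /condE divfK.
have PH0 : P H = 0%E by rewrite PrE // H0.
rewrite H0 mulr0 null_set_integral //.
exact/measurable_EFinP/measurable_funTS.
Qed.

Lemma condE_splitC (S E : set T) : measurable S -> measurable E ->
  condE P Y S = wmean (condE P Y (S `&` E)) (condE P Y (S `&` ~` E))
                      (Pr P (S `&` E)) (Pr P (S `&` ~` E)).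
Proof.
move=> mS mE; have mSE := measurableI _ _ mS mE.
have mSnE := measurableI _ _ mS (measurableC mE).
by rewrite /wmean -!condE_mulPr // -(fine_integral_splitC mS mE) -(Pr_splitC mS mE).
Qed.

Lemma condE_setI_condindep (S E : set T) (k : R) :
  measurable S -> measurable E -> 0 <= k -> Pr P (S `&` E) != 0 ->
  (forall B, measurable B ->
    P (S `&` E `&` Y @^-1` B) = (k%:E * P (S `&` Y @^-1` B))%E) ->
  condE P Y (S `&` E) = condE P Y S.
Proof.
move=> mS mE k_ge0 SE0 indep.
have PrSE : Pr P (S `&` E) = k * Pr P S.
  have := indep _ measurableT; rewrite preimage_setT !setIT /Pr => ->.
  by rewrite fineM // fin_num_measure.
have k0 : k != 0 by apply: contraNneq SE0 => k0; rewrite PrSE k0 mul0r.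
rewrite /condE (integral_setI_condindep mS mE k_ge0 indep intY) fineM //.
  by rewrite PrSE invfM mulrACA divff // mul1r.
exact: integrable_fin_num (integrableS measurableT mS (subsetT S) intY).
Qed.

End conditional_expectation.

Lemma measurable_lit d (T : measurableType d) (S : set T) (b : bool) :
  measurable S -> measurable (lit S b).
Proof. by case: b => //= mS; exact: measurableC. Qed.

Section factorization.
Context d (T : measurableType d) (R : realType) (P : probability T R)
  (A C D : set T) (Y : {RV P >-> R}).
Hypotheses (mA : measurable A) (mC : measurable C) (mD : measurable D)
  (intY : P.-integrable setT (EFin \o Y)) (fact : factorizes P A C D Y).

Let cell x y z := lit A x `&` lit C y `&` lit D z.

Let mlitA x : measurable (lit A x) := measurable_lit x mA.
Let mlitC y : measurable (lit C y) := measurable_lit y mC.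
Let mlitD z : measurable (lit D z) := measurable_lit z mD.

Lemma Pr_cell_neq0 x y z : Pr P (cell x y z) != 0 ->
  Pr P (lit C y) != 0 /\ Pr P (lit A x `&` lit C y) != 0.
Proof.
move=> cell0; have := fact x y z measurableT.
(* [cPr P setT H] is [Pr P H / Pr P H], which is [0] when [Pr P H = 0]. *)
rewrite preimage_setT !setIT [cPr _ setT _]/cPr setTI => Pr_fact.
by split; apply: contraNneq cell0 => H0; rewrite /cell Pr_fact H0 ?invr0 !(mul0r, mulr0).
Qed.

Lemma Pr_cell x y z : Pr P (lit A x `&` lit C y) != 0 ->
  Pr P (cell x y z) =
  Pr P (lit C y) * cPr P (lit D z) (lit C y) * cPr P (lit A x) (lit C y).
Proof.
move=> AC0; have := fact x y z measurableT.
by rewrite preimage_setT !setIT [cPr _ setT _]/cPr setTI divff // mulr1.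
Qed.

Lemma cell_condindep x y z (B : set R) : measurable B ->
  Pr P (lit C y) != 0 -> Pr P (lit A x `&` lit C y) != 0 ->
  P (cell x y z `&` Y @^-1` B) =
  ((cPr P (lit D z) (lit C y))%:E * P (lit A x `&` lit C y `&` Y @^-1` B))%E.
Proof.
move=> mB C0 AC0.
have mYB : measurable (Y @^-1` B) by rewrite -[_ @^-1` _]setTI; exact: measurable_funPT.
have mAxCy := measurableI _ _ (mlitA x) (mlitC y).
have mcell := measurableI _ _ (measurableI _ _ mAxCy (mlitD z)) mYB.
have mAC := measurableI _ _ mAxCy mYB.
rewrite (PrE P mcell) (PrE P mAC) /cell (fact x y z mB) -EFinM /cPr (setIC (Y @^-1` B)).
by congr EFin; field; rewrite C0 AC0.
Qed.

Lemma condE_cell x y z : Pr P (cell x y z) != 0 ->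
  condE P Y (cell x y z) = condE P Y (lit A x `&` lit C y).
Proof.
move=> cell0; have [C0 AC0] := Pr_cell_neq0 cell0.
apply: condE_setI_condindep (cPr_ge0 _ _ _) cell0 _ => //.
- exact: measurableI.
- by move=> B mB; exact: cell_condindep.
Qed.

Lemma condE_lit_wmean x z : (forall y, Pr P (cell x y z) != 0) ->
  condE P Y (lit A x `&` lit D z) =
  wmean (condE P Y (lit A x `&` C)) (condE P Y (lit A x `&` ~` C))
    (Pr P C * cPr P (lit D z) C * cPr P (lit A x) C)
    (Pr P (~` C) * cPr P (lit D z) (~` C) * cPr P (lit A x) (~` C)).
Proof.
move=> cells0.
rewrite (condE_splitC intY (measurableI _ _ (mlitA x) (mlitD z)) mC).
rewrite !(setIAC (lit A x) (lit D z)) (condE_cell (cells0 true)) (condE_cell (cells0 false)).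
have [_ AC1] := Pr_cell_neq0 (cells0 true).
have [_ AC0] := Pr_cell_neq0 (cells0 false).
by rewrite (Pr_cell _ AC1) (Pr_cell _ AC0).
Qed.

End factorization.

Theorem theorem2 (d : measure_display) (T : measurableType d) (R : realType)
  (P : probability T R) (A C D : set T) (Y : {RV P >-> R})
  (mA : measurable A) (mC : measurable C) (mD : measurable D)
  (intY : P.-integrable setT (EFin \o Y))
  (fact : factorizes P A C D Y)
  (pos : forall x y z : bool, 0 < Pr P (lit A x `&` lit C y `&` lit D z))
  (q : R)
  (hc : Pr P C = 1 / 2)
  (hac : cPr P A C = q) (hac' : cPr P (~` A) (~` C) = q)
  (hdc : cPr P D C = q) (hdc' : cPr P (~` D) (~` C) = q)
  (hq : 1 / 2 <= q)
  (h1 : condE P Y (~` A `&` ~` C) - condE P Y (~` A `&` C)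
          <= condE P Y (A `&` C) - condE P Y (A `&` ~` C))
  (h2 : 0 <= condE P Y (~` A `&` ~` C) - condE P Y (~` A `&` C)) :
  RD_true P A C Y <= RD_obs P A D Y /\ RD_obs P A D Y <= RD_crude P A Y.
Proof.
have mnA := measurableC mA; have mnC := measurableC mC; have mnD := measurableC mD.
have PnC : Pr P (~` C) = 1 / 2 by rewrite Pr_setC // hc; field.
have [C0 nC0] : Pr P C != 0 /\ Pr P (~` C) != 0.
  by rewrite PnC hc; split; apply: lt0r_neq0; lra.
have hnac : cPr P (~` A) C = 1 - q by rewrite cPr_setC // hac.
have hanc : cPr P A (~` C) = 1 - q by rewrite -[A]setCK cPr_setC // hac'.
have hndc : cPr P (~` D) C = 1 - q by rewrite cPr_setC // hdc.
have hdnc : cPr P D (~` C) = 1 - q by rewrite -[D]setCK cPr_setC // hdc'.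
have cells x z y : Pr P (lit A x `&` lit C y `&` lit D z) != 0 := lt0r_neq0 (pos x y z).
have hq1 : q < 1.
  have := (Pr_cell_neq0 fact (cells false true true)).2.
  rewrite Pr_setI_cPr //= hnac mulf_eq0 negb_or => /andP[_ nq].
  by rewrite -subr_gt0 lt_neqAle eq_sym nq -hnac cPr_ge0.
have PD : Pr P D = 1 / 2.
  by rewrite (Pr_splitC P mD mC) !Pr_setI_cPr // hdc hdnc hc PnC; field.
have PnD : Pr P (~` D) = 1 / 2 by rewrite Pr_setC // PD; field.
rewrite /RD_true /RD_obs /RD_crude.
have obsE := condE_lit_wmean mA mC mD intY fact.
rewrite (obsE _ _ (cells true true)) (obsE _ _ (cells true false)).
rewrite (obsE _ _ (cells false true)) (obsE _ _ (cells false false)) /=.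
rewrite (condE_splitC intY mA mC) (condE_splitC intY mnA mC) !Pr_setI_cPr //.
rewrite hc PnC PD PnD hac hac' hdc hdc' hnac hanc hndc hdnc.
exact: wmean_risk_difference_ordering.
Qed.
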